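(* Let $G$ be a connected graph and let $A\subset\mathcal V(G)$ be a set of vertices such that the simple random walk started from any vertex of $G$ a.s. hits $A$ in finite time. For $x\in\mathcal V(G)$ let $X^x$ be the simple random walk started from $x$ and $\tau^x$ the first time $X^x$ hits $A$. Then for $x,y\in\mathcal V(G)\setminus A$, \[ \mathbb d_{\mathrm{TV}}\big(X^x_{\tau^x},X^y_{\tau^y}\big)\leq 1-\mathbb P\big[\text{$X^x$ disconnects $y$ from $A$ before time $\tau^x$}\big], \] where $\mathbb d_{\mathrm{TV}}$ denotes the total variation distance between the laws.
   Context: ''$X^x$ disconnects $y$ from $A$ before time $\tau^x$'' means that every path in $G$ from $y$ to $A$ passes through a vertex visited by $X^x$ during $[0,\tau^x]$. *)

From HB Require Import structures.
From mathcomp Require Import all_boot all_order all_algebra.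
From mathcomp Require Import all_classical all_reals.
From mathcomp Require Import ereal esum.
Set Implicit Arguments. Unset Strict Implicit. Unset Printing Implicit Defensive.
Import Order.TTheory GRing.Theory Num.Theory.
Local Open Scope classical_set_scope.
Local Open Scope ring_scope.

(** A locally finite simple graph on vertex type [V] is given by its
    neighbour lists [nbr v] (finite, duplicate-free, symmetric, loopless). *)
Definition simple_lf_graph (V : eqType) (nbr : V -> seq V) : Prop :=
  [/\ forall v, uniq (nbr v),
      forall u v, (u \in nbr v) = (v \in nbr u)
    & forall v, v \notin nbr v].

Definition walk (V : eqType) (nbr : V -> seq V) (v : V) (p : seq V) : bool :=
  path (fun a b => b \in nbr a) v p.

Definition connected_graph (V : eqType) (nbr : V -> seq V) : Prop :=
  forall u w : V, exists p : seq V, walk nbr u p /\ last u p = w.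

(** [v :: p] is a trajectory of the walk started at [v] up to and including
    the first hitting time of [A]: every vertex before the last one lies
    outside [A] and the last vertex lies in [A]. *)
Definition hitting_path (V : eqType) (nbr : V -> seq V) (A : set V)
    (v : V) (p : seq V) : Prop :=
  walk nbr v p /\ A (last v p) /\ (forall u, u \in belast v p -> ~ A u).

(** Probability that the simple random walk from [v] follows the finite
    trajectory [v :: p]: product of 1/deg over all steps. *)
Definition srw_weight (R : realType) (V : eqType) (nbr : V -> seq V)
    (v : V) (p : seq V) : R :=
  \prod_(u <- belast v p) (size (nbr u))%:R^-1.

(** Probability of an event [E] determined by the trajectory up to time tau:
    sum of path probabilities over trajectories stopped at tau in [E]. *)
Definition stopped_prob (R : realType) (V : choiceType) (nbr : V -> seq V)
    (A : set V) (v : V) (E : seq V -> Prop) : \bar R :=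
  \esum_(p in [set p | hitting_path nbr A v p /\ E p]) (srw_weight R nbr v p)%:E.

Definition hitting_law (R : realType) (V : choiceType) (nbr : V -> seq V)
    (A : set V) (v : V) (B : set V) : \bar R :=
  stopped_prob R nbr A v (fun p => B (last v p)).

Definition dTV (R : realType) (V : Type) (mu nu : set V -> \bar R) : \bar R :=
  ereal_sup [set (`| mu B - nu B |)%E | B in [set: set V]].

Definition disconnects (V : eqType) (nbr : V -> seq V) (S : V -> Prop)
    (y : V) (A : set V) : Prop :=
  forall w : seq V, walk nbr y w -> A (last y w) ->
    exists2 z, z \in y :: w & S z.

From HB Require Import structures.
From mathcomp Require Import all_boot all_order all_algebra.
From mathcomp Require Import all_classical all_reals.
From mathcomp Require Import ereal esum.
From mathcomp Require Import lra.
Import Order.TTheory GRing.Theory Num.Theory.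
Local Open Scope classical_set_scope.
Local Open Scope ring_scope.
Set Implicit Arguments.
Unset Strict Implicit.

(** Fix [B] and let [h v] be the probability that the walk from [v] enters
    [A] in [B].  By the strong Markov property at the first visit to a set
    [Q], the probability of visiting [Q] and entering [A] in [B] is an average
    of [h] over the entrance points of [Q].  The walk from [y] must cross any
    set [S] separating [y] from [A], so [min_S h <= h y].  Hence on the event
    that [X^x] disconnects [y] from [A], it visits [Q = {v | h v <= h y}], and
    averaging over the entrance points of [Q] gives
    [P[X^x enters A in B, disconnection] <= h y], whence
    [h x - h y <= 1 - P[disconnection]]; the same bound for the complement of
    [B] gives the total variation estimate. *)

Lemma esumZl (R : realType) (T : choiceType) (I : set T) (a : T -> \bar R)
    (r : R) : 0 <= r -> (forall i, 0 <= a i)%E ->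
  (\esum_(i in I) (r%:E * a i) = r%:E * \esum_(i in I) a i)%E.
Proof.
move=> r_ge0 a_ge0; rewrite /esum -ereal_supZl //; last first.
  by apply/set0P; exists 0%E, set0; [exact: fsets_set0 | rewrite fsbig_set0].
congr ereal_sup; apply/seteqP; split => _ [X XI <-].
  by exists (\sum_(i \in X) a i)%E; [exists X | rewrite ge0_mule_fsumr].
by case: XI => F FI <-; exists F => //; rewrite ge0_mule_fsumr.
Qed.

Lemma seq_argmin (d : Order.disp_t) (T : orderType d) (U : eqType)
    (f : U -> T) (z0 : U) (s : seq U) :
  exists2 z, z \in z0 :: s & forall z', z' \in z0 :: s -> (f z <= f z')%O.
Proof.
elim: s z0 => [|u s IHs] z0.
  by exists z0 => [|z']; rewrite ?mem_head // inE => /eqP ->.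
have [z z_in z_min] := IHs u.
have [le_z0z | lt_zz0] := leP (f z0) (f z).
  exists z0 => [|z']; first exact: mem_head.
  by rewrite inE => /predU1P[-> // | /z_min]; apply: le_trans.
exists z => [|z']; first by rewrite inE z_in orbT.
by rewrite inE => /predU1P[-> | /z_min //]; apply: ltW.
Qed.

Lemma abse_sub_le_compl (R : realType) (a b c : \bar R) :
  a \is a fin_num -> b \is a fin_num -> c \is a fin_num ->
  (a <= b + c -> 1 - a <= 1 - b + c -> `|a - b| <= c)%E.
Proof.
move=> /fineK <- /fineK <- /fineK <-.
rewrite -!EFinB -!EFinD abse_EFin !lee_fin ler_norml => ? ?.
by apply/andP; split; lra.
Qed.

Section FirstEntrance.
Variables (V : eqType) (Q : pred V).

Lemma split_first_entrance (v : V) (p : seq V) : has Q (v :: p) ->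
  exists p1 p2, [/\ p = p1 ++ p2, Q (last v p1) & ~~ has Q (belast v p1)].
Proof.
elim: p v => [|u p IHp] v /=; first by rewrite orbF => Qv; exists [::], [::].
case Qv: (Q v) => /=; first by exists [::], (u :: p).
move=> /(IHp u)[p1 [p2 [-> Qlast noQ]]].
by exists (u :: p1), p2; split; rewrite //= Qv.
Qed.

Lemma first_entrance_take (v : V) (p1 p2 : seq V) :
  Q (last v p1) -> ~~ has Q (belast v p1) ->
  take (find Q (v :: p1 ++ p2)) (p1 ++ p2) = p1.
Proof.
move=> Qlast noQ; apply: take_size_cat.
by rewrite -cat_cons lastI cat_rcons find_cat (negbTE noQ) /= Qlast addn0 size_belast.
Qed.

End FirstEntrance.

Section HittingPaths.
Variables (V : eqType) (nbr : V -> seq V) (A : set V).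

Definition first_entrance_paths (Q : pred V) (v : V) : set (seq V) :=
  [set p | [/\ walk nbr v p, Q (last v p), ~~ has Q (belast v p)
            & forall u, u \in belast v p -> ~ A u]].

Lemma hitting_paths_first_entrance (Q : pred V) (B : set V) (v : V) :
  [set p | hitting_path nbr A v p /\ has Q (v :: p) /\ B (last v p)] =
  (fun k => k.1 ++ k.2) @` (first_entrance_paths Q v `*`` fun p1 =>
    [set p2 | hitting_path nbr A (last v p1) p2 /\ B (last (last v p1) p2)]).
Proof.
apply/seteqP; split.
  move=> p [hp [/split_first_entrance[p1 [p2 [p_eq Qlast noQ]]] Blast]].
  move: hp Blast; rewrite {p}p_eq /hitting_path /walk cat_path last_cat belast_cat.
  move=> [/andP[walk1 walk2] [Alast noA]] Blast.
  exists (p1, p2) => //; split.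
    by split=> // u u_in; apply: noA; rewrite mem_cat u_in.
  by do 3 split=> //; move=> u u_in; apply: noA; rewrite mem_cat u_in orbT.
move=> _ [[p1 p2] [[walk1 Qlast _ noA1] [[walk2 [Alast noA2]] Blast]] <-].
have Q_visited : has Q (v :: p1 ++ p2).
  by apply/hasP; exists (last v p1); rewrite // -cat_cons mem_cat mem_last.
rewrite /= /hitting_path /walk cat_path last_cat belast_cat.
do !split=> //; first exact/andP.
by move=> u; rewrite mem_cat => /orP[/noA1 | /noA2].
Qed.

Lemma first_entrance_cat_inj (Q : pred V) (v : V) (J : seq V -> set (seq V)) :
  set_inj (first_entrance_paths Q v `*`` J) (fun k => k.1 ++ k.2).
Proof.
move=> [p1 p2] [q1 q2] /set_mem[/= [_ Qp noQp _] _] /set_mem[/= [_ Qq noQq _] _] /= e.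
have e1 : p1 = q1.
  by rewrite -(first_entrance_take p2 Qp noQp) e (first_entrance_take q2 Qq noQq).
by move/eqP: e; rewrite e1 eqseq_cat // eqxx => /eqP ->.
Qed.

End HittingPaths.

Section StoppedWalk.
Variables (R : realType) (V : choiceType) (nbr : V -> seq V) (A : set V).
Local Notation weight := (srw_weight R nbr).
Local Notation prob := (stopped_prob R nbr A).
Local Notation law := (hitting_law R nbr A).

Lemma srw_weight_cat (v : V) (p1 p2 : seq V) :
  weight v (p1 ++ p2) = weight v p1 * weight (last v p1) p2.
Proof. by rewrite /srw_weight belast_cat big_cat. Qed.

Lemma srw_weight_ge0 (v : V) (p : seq V) : 0 <= weight v p.
Proof. by apply: prodr_ge0 => u _; rewrite invr_ge0 ler0n. Qed.

Local Open Scope ereal_scope.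

Lemma stopped_prob_ge0 (v : V) (E : seq V -> Prop) : 0 <= prob v E.
Proof. by apply: esum_ge0 => p _; rewrite lee_fin srw_weight_ge0. Qed.

Lemma eq_stopped_prob (v : V) (E1 E2 : seq V -> Prop) :
  (forall p, hitting_path nbr A v p -> (E1 p <-> E2 p)) ->
  prob v E1 = prob v E2.
Proof.
move=> E12; congr esum; apply/seteqP; split=> p /= [hp Ep];
  by split=> //; apply/(E12 p hp).
Qed.

Lemma stopped_probID (v : V) (E F : seq V -> Prop) :
  prob v E = prob v (fun p => E p /\ F p) + prob v (fun p => E p /\ ~ F p).
Proof.
rewrite /stopped_prob (esumID [set p | F p]); last first.
  by move=> p _; rewrite lee_fin srw_weight_ge0.
by congr (_ + _); congr esum; apply/seteqP; split=> p /=; tauto.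
Qed.

Lemma le_stopped_prob (v : V) (E1 E2 : seq V -> Prop) :
  (forall p, hitting_path nbr A v p -> E1 p -> E2 p) ->
  prob v E1 <= prob v E2.
Proof.
move=> E12; rewrite (stopped_probID v E2 E1).
rewrite (@eq_stopped_prob v (fun p => E2 p /\ E1 p) E1).
  by rewrite leeDl // stopped_prob_ge0.
by move=> p hp; split=> [[] | E1p] //; split=> //; apply: E12.
Qed.

(** The strong Markov property at the first visit to [Q]. *)
Lemma stopped_prob_first_entrance (Q : pred V) (B : set V) (v : V) :
  prob v (fun p => has Q (v :: p) /\ B (last v p)) =
  \esum_(p1 in first_entrance_paths nbr A Q v)
     ((weight v p1)%:E * law (last v p1) B).
Proof.
rewrite /hitting_law /stopped_prob hitting_paths_first_entrance.
rewrite esum_image; last exact: first_entrance_cat_inj.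
rewrite -(esum_esum (a := fun p1 p2 => (weight v (p1 ++ p2))%:E)); last first.
  by move=> p1 p2 _ _; rewrite lee_fin srw_weight_ge0.
apply: eq_esum => p1 _; rewrite -esumZl ?srw_weight_ge0 //; last first.
  by move=> p2; rewrite lee_fin srw_weight_ge0.
by apply: eq_esum => p2 _; rewrite srw_weight_cat EFinM.
Qed.

Hypothesis hitA : forall v : V, prob v (fun _ => True) = 1.

Lemma stopped_prob_le1 (v : V) (E : seq V -> Prop) : prob v E <= 1.
Proof. by rewrite -(hitA v); apply: le_stopped_prob. Qed.

Lemma stopped_prob_fin_num (v : V) (E : seq V -> Prop) :
  prob v E \is a fin_num.
Proof.
rewrite ge0_fin_numE ?stopped_prob_ge0 //.
by rewrite (le_lt_trans (stopped_prob_le1 v E)) ?ltry.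
Qed.

Lemma stopped_probC (v : V) (E : seq V -> Prop) :
  prob v (fun p => ~ E p) = 1 - prob v E.
Proof.
have hit_split : prob v (fun _ => True) = prob v E + prob v (fun p => ~ E p).
  rewrite (stopped_probID v _ E).
  by congr (_ + _); apply: eq_stopped_prob => p _ /=; tauto.
by rewrite -(hitA v) hit_split (addeC (prob v E)) addeK ?stopped_prob_fin_num.
Qed.

Lemma hitting_lawC (v : V) (B : set V) : law v (~` B) = 1 - law v B.
Proof. exact: stopped_probC. Qed.

Lemma first_entrance_mass (Q : pred V) (v : V) :
  \esum_(p in first_entrance_paths nbr A Q v) (weight v p)%:E =
  prob v (fun p => has Q (v :: p)).
Proof.
rewrite (@eq_stopped_prob v _ (fun p => has Q (v :: p) /\ setT (last v p))).
  rewrite stopped_prob_first_entrance; apply: eq_esum => p _.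
  by rewrite /hitting_law (@eq_stopped_prob _ _ (fun _ => True)) ?hitA ?mule1.
by move=> p _; split=> [|[]].
Qed.

Lemma stopped_prob_visit_le (Q : pred V) (B : set V) (c : \bar R) (v : V) :
  c \is a fin_num -> 0 <= c -> (forall u, Q u -> law u B <= c) ->
  prob v (fun p => has Q (v :: p) /\ B (last v p)) <=
  c * prob v (fun p => has Q (v :: p)).
Proof.
move=> c_fin c_ge0 Q_le.
rewrite stopped_prob_first_entrance -first_entrance_mass -(fineK c_fin).
rewrite -esumZl ?fine_ge0 //; last by move=> p; rewrite lee_fin srw_weight_ge0.
apply: le_esum => p [_ Qlast _ _]; rewrite [leRHS]muleC fineK //.
by apply: lee_wpmul2l; [rewrite lee_fin srw_weight_ge0 | exact: Q_le].
Qed.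

Lemma stopped_prob_visit_ge (Q : pred V) (B : set V) (c : \bar R) (v : V) :
  c \is a fin_num -> 0 <= c -> (forall u, Q u -> c <= law u B) ->
  c * prob v (fun p => has Q (v :: p)) <=
  prob v (fun p => has Q (v :: p) /\ B (last v p)).
Proof.
move=> c_fin c_ge0 Q_ge.
rewrite stopped_prob_first_entrance -first_entrance_mass -(fineK c_fin).
rewrite -esumZl ?fine_ge0 //; last by move=> p; rewrite lee_fin srw_weight_ge0.
apply: le_esum => p [_ Qlast _ _]; rewrite [leLHS]muleC fineK //.
by apply: lee_wpmul2l; [rewrite lee_fin srw_weight_ge0 | exact: Q_ge].
Qed.

Lemma hitting_law_separating_min (B : set V) (y z0 : V) (s : seq V) :
  disconnects nbr (fun z => z \in z0 :: s) y A ->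
  exists2 z, z \in z0 :: s & law z B <= law y B.
Proof.
move=> sep; have [z z_in z_min] := seq_argmin (fun z => law z B) z0 s.
exists z => //; set S := fun u => u \in z0 :: s.
have hitS : prob y (fun p => has S (y :: p)) = 1.
  rewrite -(hitA y); apply: eq_stopped_prob => p [walk_p [Alast _]].
  by split=> // _; have [u u_in Su] := sep p walk_p Alast; apply/hasP; exists u.
rewrite -[leLHS]mule1 -hitS.
apply: (@le_trans _ _ (prob y (fun p => has S (y :: p) /\ B (last y p)))).
  apply: stopped_prob_visit_ge; last exact: z_min.
    exact: stopped_prob_fin_num.
  exact: stopped_prob_ge0.
by apply: le_stopped_prob => p _ [].
Qed.

Lemma stopped_prob_disconnects_le (B : set V) (x y : V) :
  prob x (fun p => B (last x p) /\
                   disconnects nbr (fun z => z \in x :: p) y A) <= law y B.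
Proof.
set Q := fun u => law u B <= law y B.
apply: (@le_trans _ _ (prob x (fun p => has Q (x :: p) /\ B (last x p)))).
  apply: le_stopped_prob => p _ [Blast sep]; split=> //.
  by have [z z_in Qz] := hitting_law_separating_min B sep; apply/hasP; exists z.
have c_ge0 : 0 <= law y B by exact: stopped_prob_ge0.
apply: (@le_trans _ _ (law y B * prob x (fun p => has Q (x :: p)))).
  by apply: stopped_prob_visit_le => //; exact: stopped_prob_fin_num.
by rewrite -[leRHS]mule1; apply: lee_wpmul2l => //; exact: stopped_prob_le1.
Qed.

Lemma hitting_law_le_disconnects (B : set V) (x y : V) :
  law x B <= law y B +
    prob x (fun p => ~ disconnects nbr (fun z => z \in x :: p) y A).
Proof.
rewrite {1}/hitting_law (stopped_probID x _
  (fun p => disconnects nbr (fun z => z \in x :: p) y A)).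
apply: leeD; first exact: stopped_prob_disconnects_le.
by apply: le_stopped_prob => p _ [].
Qed.

End StoppedWalk.

Theorem lemma3p12 (R : realType) (V : choiceType) (nbr : V -> seq V)
    (A : set V)
    (Hgraph : simple_lf_graph nbr)
    (Hconn : connected_graph nbr)
    (Hhit : forall v : V, stopped_prob R nbr A v (fun _ => True) = 1%E)
    (x y : V) (Hx : ~ A x) (Hy : ~ A y) :
  (dTV (hitting_law R nbr A x) (hitting_law R nbr A y)
   <= 1 - stopped_prob R nbr A x
            (fun p => disconnects nbr (fun z => z \in x :: p) y A))%E.
Proof.
rewrite /dTV; apply: ge_ereal_sup => _ [B _ <-].
rewrite -(stopped_probC Hhit); apply: abse_sub_le_compl.
- exact: stopped_prob_fin_num.
- exact: stopped_prob_fin_num.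
- exact: stopped_prob_fin_num.
- exact: hitting_law_le_disconnects.
- by rewrite -!(hitting_lawC Hhit); exact: hitting_law_le_disconnects.
Qed.
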